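(* Let $\square$ be a subcomplex of $I^n$, and let $S^k$ be a subcomplex of $\square$ isomorphic to $\partial I^{k+1}$, with $k\geq 1$. Then $S^k$ is a face-like subcomplex of $\square$ if and only if $S^k$ is not the boundary of a $(k+1)$-dimensional face of $\square$, i.e. $S^k\neq\partial\hat F$ for every $F\in\square$.
   Context: A cubical complex consists of a finite vertex set $V$ and a collection $\square$ of nonempty subsets of $V$ (faces) such that: every singleton is a face; for each face $F$ the poset $\hat F=\{G\in\square : G\subseteq F\}$ is isomorphic to the poset of nonempty faces of a cube (of dimension $\dim F$); and the intersection of two faces is empty or a face. $I^n$ is the $n$-cube as a cubical complex: vertex set $\{0,1\}^n$, faces indexed by $\{0,1,*\}^n$ (the face $(p_i)$ is the set of $x$ with $x_i=p_i$ whenever $p_i\ne *$). $\partial I^{m}$ is $I^m$ with the top face $( *,\dots,* )$ removed; for a face $F$, $\partial\hat F=\hat F\setminus\{F\}$. A subcomplex is a subset of vertices and faces forming a cubical complex; isomorphism means a vertex bijection mapping faces to faces in both directions. A subcomplex $\Gamma$ of $\square$ is face-like if for every face $F\in\square$, $F\cap V(\Gamma)$ is empty or a face of $\Gamma$. *)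

From mathcomp Require Import all_boot.
Set Implicit Arguments. Unset Strict Implicit. Unset Printing Implicit Defensive.

(* Vertices of I^n: {0,1}^n, i.e. functions 'I_n -> bool. *)
Notation cvert n := {ffun 'I_n -> bool}.

(* A complex on a finite type T is given by its set of faces; its vertex set
   is the union of the faces (every vertex is a singleton face). *)
Definition vertices (T : finType) (K : {set {set T}}) : {set T} :=
  \bigcup_(F in K) F.

(* The face of I^m indexed by p in {0,1,*}^m (None encodes the star). *)
Definition cube_face (m : nat) (p : {ffun 'I_m -> option bool}) : {set cvert m} :=
  [set x : cvert m | [forall i, if p i is Some b then x i == b else true]].

Definition cube_faces (m : nat) : {set {set cvert m}} :=
  [set cube_face p | p : {ffun 'I_m -> option bool}].

Definition boundary_cube (m : nat) : {set {set cvert m}} :=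
  cube_faces m :\ [set: cvert m].

Definition hat (T : finType) (K : {set {set T}}) (F : {set T}) : {set {set T}} :=
  [set G in K | G \subset F].

Definition hat_boundary (T : finType) (K : {set {set T}}) (F : {set T}) :=
  hat K F :\ F.

Definition poset_iso (T U : finType) (A : {set {set T}}) (B : {set {set U}}) :=
  exists phi : {set T} -> {set U},
    [/\ {in A &, injective phi}, phi @: A = B &
        {in A &, forall G H : {set T}, (G \subset H) = (phi G \subset phi H)}].

Definition cubical_complex (T : finType) (K : {set {set T}}) : Prop :=
  [/\ set0 \notin K,
      (forall x, x \in vertices K -> [set x] \in K),
      (forall F, F \in K -> exists m, poset_iso (hat K F) (cube_faces m)) &
      (forall F G, F \in K -> G \in K -> F :&: G = set0 \/ F :&: G \in K)].

(* Gamma is a subcomplex of K: a subset of the faces forming a cubical complex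
   (its vertex set is automatically a subset of that of K). *)
Definition subcomplex (T : finType) (G K : {set {set T}}) : Prop :=
  G \subset K /\ cubical_complex G.

Definition complex_iso (T U : finType) (K : {set {set T}}) (L : {set {set U}}) :=
  exists f : T -> U,
    [/\ {in vertices K &, injective f},
        f @: vertices K = vertices L &
        forall A : {set T}, A \subset vertices K -> (A \in K) = (f @: A \in L)].

Definition face_like (T : finType) (G K : {set {set T}}) : Prop :=
  forall F, F \in K -> F :&: vertices G = set0 \/ F :&: vertices G \in G.

From mathcomp Require Import all_boot.
Set Implicit Arguments. Unset Strict Implicit. Unset Printing Implicit Defensive.

(* The key fact is rigidity: the isomorphism S ~ \partial I^N (N = k+1 >= 2) inverts
   to an injection g of the vertices of I^N into I^n mapping every edge of I^N to an
   edge of I^n.  Comparing the two paths around each square of I^N shows that parallel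
   edges go in the same direction, so g is a coordinate embedding; hence the vertices
   V of S span a face of I^n and every cube face G meeting V either traces a face of S
   on V or contains V.  Independently, a face of a subcomplex of I^n carries all its
   cube subfaces (a count of atoms and of subfaces in \hat F).

   If S is a
   nonempty \partial \hat F, the trace of F on V is F itself, not a face of S.
   Conversely a face of K violating face-likeness contains V, so V is a face of K and
   S = \partial \hat V. *)

Lemma in_cube_face m (p : {ffun 'I_m -> option bool}) x :
  (x \in cube_face p) = [forall i, if p i is Some b then x i == b else true].
Proof. by rewrite inE. Qed.

Definition face_point m (p : {ffun 'I_m -> option bool}) (b : bool) : cvert m :=
  [ffun j => if p j is Some c then c else b].

Lemma face_pointP m (p : {ffun 'I_m -> option bool}) b : face_point p b \in cube_face p.
Proof. by rewrite in_cube_face; apply/forallP=> i; rewrite ffunE; case: (p i). Qed.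

Lemma cube_face_neq0 m (p : {ffun 'I_m -> option bool}) : cube_face p != set0.
Proof. by apply/set0Pn; exists (face_point p true); apply: face_pointP. Qed.

(* A subface fixes every coordinate its superface fixes, to the same value;
   evaluating the inclusion at a point of q with free coordinates ~~ b shows it. *)
Lemma subface_fixed m (p q : {ffun 'I_m -> option bool}) :
  cube_face q \subset cube_face p -> forall i b, p i = Some b -> q i = Some b.
Proof.
move=> sub i b pib; have := subsetP sub _ (face_pointP q (~~ b)).
rewrite in_cube_face => /forallP /(_ i); rewrite pib ffunE.
by case: (q i) => [c|] /eqP; [move->|case: b {pib}].
Qed.

Lemma cube_face_inj m : injective (@cube_face m).
Proof.
move=> p q e; apply/ffunP=> i; case pi: (p i) => [b|].
  by rewrite (subface_fixed (p := p) (q := q) _ pi) // e.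
case qi: (q i) => [b|] //.
by rewrite -pi (subface_fixed (p := q) (q := p) _ qi) // e.
Qed.

Lemma set1_cube_face m (x : cvert m) : [set x] = cube_face [ffun i => Some (x i)].
Proof.
apply/setP=> y; rewrite inE in_cube_face.
apply/eqP/forallP => [->|H] ; first by move=> i; rewrite ffunE.
by apply/ffunP=> i; have := H i; rewrite ffunE => /eqP.
Qed.

Lemma set1_in_cube_faces m (x : cvert m) : [set x] \in cube_faces m.
Proof. by rewrite set1_cube_face; apply: imset_f. Qed.

Lemma card_ffun_pred m (rT : finType) (P : 'I_m -> rT -> bool) :
  #|[set f : {ffun 'I_m -> rT} | [forall i, P i (f i)]]| = \prod_i #|P i|.
Proof.
have := @card_family _ (fun _ => rT) (fun i => [pred x | P i x]).
rewrite foldrE big_image /= => <-.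
by apply: eq_card => f; rewrite inE; apply/forallP/familyP.
Qed.

Definition free_dim m (p : {ffun 'I_m -> option bool}) := #|[set i | p i == None]|.

Lemma prod_free_coords m (p : {ffun 'I_m -> option bool}) (c : nat) (h : 'I_m -> nat) :
  (forall i, h i = if p i is Some _ then 1 else c) -> \prod_i h i = c ^ free_dim p.
Proof.
move=> Hh; rewrite (bigID (fun i => p i == None)) /=.
rewrite [X in _ * X]big1 ?muln1; last by move=> i; rewrite Hh; case: (p i).
rewrite -prod_nat_const; apply: eq_big => [i|i /eqP pi]; first by rewrite inE.
by rewrite Hh pi.
Qed.

Lemma card_cube_face m (p : {ffun 'I_m -> option bool}) :
  #|cube_face p| = 2 ^ free_dim p.
Proof.
rewrite (card_ffun_pred (fun i x => if p i is Some b then x == b else true)).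
apply: prod_free_coords => i; case: (p i) => [b|].
  by rewrite -(card1 b); apply: eq_card.
by rewrite -card_bool; apply: eq_card.
Qed.

Definition subfaces m (p : {ffun 'I_m -> option bool}) :=
  [set q : {ffun 'I_m -> option bool} |
    [forall i, if p i is Some b then q i == Some b else true]].

Lemma card_subfaces m (p : {ffun 'I_m -> option bool}) :
  #|subfaces p| = 3 ^ free_dim p.
Proof.
rewrite (card_ffun_pred (fun i x => if p i is Some b then x == Some b else true)).
apply: prod_free_coords => i; case: (p i) => [b|].
  by rewrite -(card1 (Some b)); apply: eq_card.
by have := card_option bool; rewrite card_bool => <-; apply: eq_card.
Qed.

Lemma card_cube_faces m : #|cube_faces m| = 3 ^ m.
Proof.
rewrite card_imset; last exact: cube_face_inj.
by rewrite card_ffun card_option card_bool card_ord.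
Qed.

Definition flip m (c : 'I_m) (x : cvert m) : cvert m :=
  [ffun j => if j == c then ~~ x j else x j].

Lemma flipE m c (x : cvert m) j : flip c x j = x j (+) (j == c).
Proof. by rewrite ffunE; case: (j == c); rewrite ?addbT ?addbF. Qed.

Lemma flipK m c : involutive (@flip m c).
Proof. by move=> x; apply/ffunP=> j; rewrite !flipE -addbA addbb addbF. Qed.

Lemma flipC m c d (x : cvert m) : flip c (flip d x) = flip d (flip c x).
Proof. by apply/ffunP=> j; rewrite !flipE -!addbA (addbC (j == c)). Qed.

Lemma flip_neq m c (x : cvert m) : flip c x != x.
Proof. by apply/eqP=> /ffunP /(_ c); rewrite flipE eqxx addbT; case: (x c). Qed.

(* Every vertex is reached from the origin by flips, giving an induction principle. *)
Lemma flip_ind m (P : cvert m -> Prop) :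
  P [ffun=> false] -> (forall y j, P y -> P (flip j y)) -> forall y, P y.
Proof.
move=> P0 PS y; move: {2}#|[set i | y i]| (leqnn #|[set i | y i]|) => k.
elim: k y => [|k IH] y hk.
  suff -> : y = [ffun=> false] by [].
  apply/ffunP=> i; rewrite ffunE; apply/negbTE; apply: contraTN hk => yi.
  by rewrite -ltnNge card_gt0; apply/set0Pn; exists i; rewrite inE.
have [/existsP [i yi]|/existsPn y0] := boolP [exists i, y i]; last first.
  by suff -> : y = [ffun=> false] by []; apply/ffunP=> i; rewrite ffunE; apply/negbTE.
rewrite -(flipK i y); apply/PS/IH; rewrite -ltnS (leq_trans _ hk) // proper_card //.
apply/properP; split; last by exists i; rewrite !inE // flipE eqxx yi.
apply/subsetP=> j; rewrite !inE flipE; case: (eqVneq j i) => [->|_]; first by rewrite yi.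
by rewrite addbF.
Qed.

Lemma edge_is_flip m (a b : cvert m) :
  a != b -> [set a; b] \in cube_faces m -> exists c, b = flip c a.
Proof.
move=> ab /imsetP [p _ e].
have [c acbc] : exists c, a c != b c.
  apply/existsP; apply: contraR ab => /existsPn H.
  by apply/eqP/ffunP=> i; have := H i; rewrite negbK => /eqP.
have aF : a \in cube_face p by rewrite -e !inE eqxx.
have bF : b \in cube_face p by rewrite -e !inE eqxx orbT.
have pc : p c = None.
  move: aF bF acbc; rewrite !in_cube_face => /forallP /(_ c) + /forallP /(_ c).
  by case: (p c) => // bb /eqP -> /eqP ->; rewrite eqxx.
have : flip c a \in cube_face p.
  move: aF; rewrite !in_cube_face => /forallP aF; apply/forallP=> i.
  by rewrite flipE; case: (eqVneq i c) => [->|_]; rewrite ?pc ?addbF ?aF.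
by rewrite -e !inE (negbTE (flip_neq _ _)) => /eqP <-; exists c.
Qed.

Lemma square_closes m (G : cvert m) a b c d : a != b ->
  flip c (flip b G) = flip d (flip a G) -> flip c (flip b G) != G -> c = a.
Proof.
move=> ab e ne; apply/eqP; apply: contraNT ne => ca.
have := congr1 (fun x : cvert m => x a) e.
rewrite !flipE eqxx [a == c]eq_sym (negbTE ca) (negbTE ab) !addbF addbT => h.
suff da : d = a by rewrite e da flipK.
by apply/eqP; rewrite eq_sym; move: h; case: (a == d); rewrite ?addbF //; case: (G a).
Qed.

Lemma edge_map_coordinates N n (g : cvert N -> cvert n) : injective g ->
  (forall y i, exists c, g (flip i y) = flip c (g y)) ->
  exists D : 'I_N -> 'I_n,
    injective D /\ forall y i, g (flip i y) = flip (D i) (g y).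
Proof.
move=> ginj edge; pose z : cvert N := [ffun=> false].
have [D HD] : exists D : 'I_N -> 'I_n, forall i, g (flip i z) = flip (D i) (g z).
  have edgeb i : exists c, g (flip i z) == flip c (g z).
    by have [c /eqP] := edge z i; exists c.
  by exists (fun i => xchoose (edgeb i)) => i; apply/eqP/(xchooseP (edgeb i)).
have Dinj : injective D.
  move=> i j e; apply/eqP; apply: contraT => ij.
  have /ffunP /(_ i) : flip i z = flip j z by apply: ginj; rewrite !HD e.
  by rewrite !flipE eqxx (negbTE ij) ffunE.
exists D; split=> //; apply: flip_ind => [|y j IH] i; first exact: HD.
have [->|ij] := eqVneq i j; first by rewrite flipK IH flipK.
have [c Hc] := edge (flip j y) i; have [d Hd] := edge (flip i y) j.
rewrite Hc IH; congr flip; rewrite IH in Hc.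
apply: (square_closes (G := g y) (b := D j) (d := d)).
- by apply: contra ij => /eqP /Dinj ->.
- by rewrite -Hc -IH -Hd flipC.
- rewrite -Hc; apply/eqP=> /ginj /ffunP /(_ i).
  by rewrite !flipE eqxx (negbTE ij) addbF addbT; case: (y i).
Qed.

Section CoordinateEmbedding.

Variables (N n : nat) (g : cvert N -> cvert n) (D : 'I_N -> 'I_n).
Hypothesis D_inj : injective D.
Hypothesis g_flip : forall y i, g (flip i y) = flip (D i) (g y).

Let z : cvert N := [ffun=> false].

Lemma embeddingE y c : g y c = g z c (+) [exists i, y i && (D i == c)].
Proof.
elim/flip_ind: y c => [|y j IH] c.
  suff -> : [exists i, z i && (D i == c)] = false by rewrite addbF.
  by apply/existsPn=> i; rewrite ffunE.
rewrite g_flip flipE IH -addbA; congr addb.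
have [->|cD] := eqVneq c (D j).
  have e (y' : cvert N) : [exists i, y' i && (D i == D j)] = y' j.
    apply/existsP/idP => [[i /andP [yi /eqP /D_inj ij]]|yj]; first by rewrite -ij.
    by exists j; rewrite yj eqxx.
  by rewrite !e flipE eqxx.
rewrite addbF; apply/existsP/existsP => -[i /andP [yi /eqP Dic]]; exists i;
  rewrite -Dic eqxx andbT; move: yi; rewrite flipE;
  have [ij|_] := eqVneq i j; rewrite ?addbF //; by move: cD; rewrite -Dic ij eqxx.
Qed.

Lemma embedding_image_coord y i : g y (D i) = g z (D i) (+) y i.
Proof.
rewrite embeddingE; congr addb.
apply/existsP/idP => [[j /andP [yj /eqP /D_inj <-]] //|yi].
by exists i; rewrite yi eqxx.
Qed.

Lemma embedding_fixed_coord y c : ~~ [exists i, D i == c] -> g y c = g z c.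
Proof.
move=> /existsPn nc; rewrite embeddingE.
suff -> : [exists i, y i && (D i == c)] = false by rewrite addbF.
by apply/existsPn=> i; rewrite (negbTE (nc i)) andbF.
Qed.

Lemma embedding_preimage_face p y0 : g y0 \in cube_face p ->
  [set y | g y \in cube_face p] \in cube_faces N.
Proof.
move=> gy0p; pose q : {ffun 'I_N -> option bool} :=
  [ffun i => if p (D i) is Some b then Some (b (+) g z (D i)) else None].
apply/imsetP; exists q => //; apply/setP=> y; rewrite !inE.
apply/forallP/forallP => Hy i.
  have := Hy (D i); rewrite ffunE (embedding_image_coord y).
  by case: (p (D i)) => // b /eqP <-; rewrite addbAC addbb.
have [/existsP [j /eqP <-]|nD] := boolP [exists j, D j == i].
  have := Hy j; rewrite ffunE (embedding_image_coord y).
  by case: (p (D j)) => // b /eqP ->; rewrite addbC -addbA addbb addbF.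
rewrite (embedding_fixed_coord _ nD); move: gy0p; rewrite in_cube_face.
by move=> /forallP /(_ i); rewrite (embedding_fixed_coord _ nD).
Qed.

Lemma embedding_image_face : g @: setT \in cube_faces n.
Proof.
pose p : {ffun 'I_n -> option bool} :=
  [ffun c => if [exists i, D i == c] then None else Some (g z c)].
apply/imsetP; exists p => //; apply/setP=> x; rewrite in_cube_face.
apply/imsetP/forallP => [[y _ ->] c|Hx].
  by rewrite ffunE; case: ifP => // /negbT nD; rewrite (embedding_fixed_coord _ nD).
exists [ffun i => x (D i) (+) g z (D i)] => //.
apply/ffunP=> c; have [/existsP [i /eqP <-]|nD] := boolP [exists i, D i == c].
  by rewrite embedding_image_coord ffunE addbC -addbA addbb addbF.
by rewrite (embedding_fixed_coord _ nD); have := Hx c; rewrite ffunE (negbTE nD) => /eqP.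
Qed.

End CoordinateEmbedding.

Definition atoms (T : finType) (A : {set {set T}}) :=
  [set X in A | [forall Y in A, (Y \subset X) ==> (Y == X)]].

Lemma poset_iso_card_atoms (T U : finType) (A : {set {set T}}) (B : {set {set U}}) :
  poset_iso A B -> #|atoms A| = #|atoms B|.
Proof.
case=> phi [inj img ord].
have sub : atoms A \subset A by apply/subsetP=> X; rewrite inE => /andP [].
suff <- : phi @: atoms A = atoms B.
  by rewrite card_in_imset // => X Y /(subsetP sub) XA /(subsetP sub) YA; apply: inj.
apply/setP=> X'; apply/imsetP/idP => [[X] | ].
  rewrite inE => /andP [XA /forallP HX] ->; rewrite inE -img imset_f //=.
  apply/forallP=> Y'; apply/implyP=> /imsetP [Y YA ->]; apply/implyP.
  by rewrite -ord // => sY; have := HX Y; rewrite YA sY /= => /eqP ->.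
rewrite inE => /andP [X'B /forallP HX]; move: X'B; rewrite -img => /imsetP [X XA eX].
exists X => //; rewrite inE XA /=; apply/forallP=> Y; apply/implyP=> YA; apply/implyP=> sY.
have := HX (phi Y); rewrite -img imset_f //= eX -ord // sY /= => /eqP e.
by apply/eqP; apply: inj.
Qed.

Lemma atoms_singletons (T : finType) (A : {set {set T}}) (V : {set T}) :
  set0 \notin A -> (forall X, X \in A -> X \subset V) ->
  (forall x, x \in V -> [set x] \in A) -> atoms A = [set [set x] | x in V].
Proof.
move=> A0 AV VA; apply/setP=> X; apply/idP/imsetP => [|[x xV ->]].
  rewrite inE => /andP [XA /forallP HX].
  have /set0Pn [x xX] : X != set0 by apply: contraNneq A0 => <-.
  have xV : x \in V by apply: subsetP xX; apply: AV.
  by exists x => //; have := HX [set x]; rewrite VA //= sub1set xX => /eqP.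
rewrite inE VA //=; apply/forallP=> Y; apply/implyP=> YA; apply/implyP.
by rewrite subset1 => /orP [] // /eqP Y0; rewrite -Y0 YA in A0.
Qed.

(* A face F of a complex whose face poset is that of the m-cube has 2^m vertices,
   the number of atoms of that poset. *)
Lemma hat_card_vertices (T : finType) (K : {set {set T}}) (F : {set T}) m :
  set0 \notin K -> (forall x, x \in F -> [set x] \in K) ->
  poset_iso (hat K F) (cube_faces m) -> #|F| = 2 ^ m.
Proof.
move=> K0 KF iso; have := poset_iso_card_atoms iso.
rewrite (@atoms_singletons _ _ F); first last.
- by move=> x xF; rewrite inE sub1set xF andbT KF.
- by move=> X; rewrite inE => /andP [].
- by apply: contra K0; rewrite inE => /andP [].
rewrite (@atoms_singletons _ _ setT); first last.
- by move=> x _; apply: set1_in_cube_faces.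
- by move=> X _; apply: subsetT.
- by apply/imsetP=> -[q _ /esym /eqP]; apply/negP; apply: cube_face_neq0.
rewrite !card_imset; try exact: set1_inj.
by rewrite cardsT card_ffun card_bool card_ord.
Qed.

(* In a subcomplex K of I^n, a face F = cube_face p has all its cube subfaces in K:
   \hat F has as many elements as the 3^s subfaces of a face with s free coordinates,
   where 2^s = #|F| forces s to be the dimension of \hat F. *)
Lemma subcomplex_cube_hat n (K : {set {set cvert n}}) p :
  subcomplex K (cube_faces n) -> cube_face p \in K ->
  hat K (cube_face p) = @cube_face n @: subfaces p.
Proof.
case=> /subsetP KC [K0 Kv Kiso _] FK; have [m iso] := Kiso _ FK.
have KF x : x \in cube_face p -> [set x] \in K.
  by move=> xF; apply: Kv; apply/bigcupP; exists (cube_face p).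
have cardF := hat_card_vertices K0 KF iso.
have sm : free_dim p = m.
  by apply: (@expnI 2) => //; rewrite -card_cube_face.
apply/eqP; rewrite eqEcard card_imset; last exact: cube_face_inj.
rewrite card_subfaces sm -card_cube_faces.
case: iso => phi [inj <- _]; rewrite card_in_imset // leqnn andbT.
apply/subsetP=> X; rewrite inE => /andP [/KC /imsetP [q _ ->] sub].
apply: imset_f; rewrite inE; apply/forallP=> i.
by case pi: (p i) => [b|] //; rewrite (subface_fixed sub pi).
Qed.

Lemma subcomplex_cube_down_closed n (K : {set {set cvert n}}) F G :
  subcomplex K (cube_faces n) -> F \in K -> G \in cube_faces n -> G \subset F ->
  G \in K.
Proof.
move=> Kc FK /imsetP [q _ ->] GF.
have /imsetP [p _ Fp] := subsetP Kc.1 F FK; rewrite Fp in FK GF.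
have : cube_face q \in hat K (cube_face p).
  rewrite subcomplex_cube_hat //; apply: imset_f; rewrite inE; apply/forallP=> i.
  by case pi: (p i) => [b|] //; rewrite (subface_fixed GF pi).
by rewrite inE => /andP [].
Qed.

Lemma edge_cube_face m (y : cvert m) i :
  [set y; flip i y] = cube_face [ffun l => if l == i then None else Some (y l)].
Proof.
apply/setP=> x; rewrite !inE; apply/idP/forallP => [/orP [] /eqP -> l|Hx].
- by rewrite ffunE; case: ifP.
- by rewrite ffunE flipE; case: ifP => // _; rewrite addbF.
suff : x = y \/ x = flip i y by case=> ->; rewrite eqxx ?orbT.
have xl l : l != i -> x l = y l by move=> li; have := Hx l; rewrite ffunE (negbTE li) => /eqP.
have [xi|xi] := eqVneq (x i) (y i); [left|right]; apply/ffunP=> l; rewrite ?flipE;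
  have [->|li] := eqVneq l i; rewrite ?addbT; try by rewrite xl ?addbF.
all: by move: xi; case: (x i); case: (y i).
Qed.

Lemma in_boundary_cube N (A : {set cvert N}) :
  A \in cube_faces N -> #|A| < 2 ^ N -> A \in boundary_cube N.
Proof.
move=> Aface cardA; rewrite !inE Aface andbT; apply: contraTneq cardA => ->.
by rewrite cardsT card_ffun card_bool card_ord ltnn.
Qed.

Lemma boundary_cube_vertex N (y : cvert N) : 0 < N -> [set y] \in boundary_cube N.
Proof.
move=> N0; rewrite in_boundary_cube ?set1_in_cube_faces // cards1.
by rewrite -(expn0 2) ltn_exp2l.
Qed.

Lemma boundary_cube_edge N (y : cvert N) i : 1 < N -> [set y; flip i y] \in boundary_cube N.
Proof.
move=> N1; rewrite in_boundary_cube ?cards2 ?(negbTE (flip_neq _ _)) ?edge_cube_face //.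
  exact: imset_f.
by rewrite eq_sym flip_neq -(expn1 2) ltn_exp2l.
Qed.

Lemma vertices_boundary_cube N : 0 < N -> vertices (boundary_cube N) = setT.
Proof.
move=> N0; apply/setP=> y; rewrite inE; apply/bigcupP; exists [set y].
  exact: boundary_cube_vertex.
by rewrite inE.
Qed.

Lemma complex_iso_inverse (T U : finType) (S : {set {set T}}) (L : {set {set U}}) :
  complex_iso S L -> vertices L = setT ->
  exists g : U -> T, [/\ injective g, vertices S = g @: setT &
                         forall B : {set U}, (g @: B \in S) = (B \in L)].
Proof.
case=> f [finj fimg fiso] VL.
have ex y : exists x, (x \in vertices S) && (f x == y).
  have : y \in f @: vertices S by rewrite fimg VL inE.
  by case/imsetP=> x xV ->; exists x; rewrite xV eqxx.
pose g y := xchoose (ex y).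
have gP y : g y \in vertices S /\ f (g y) = y by have /andP [-> /eqP ->] := xchooseP (ex y).
have gf x : x \in vertices S -> g (f x) = x.
  by move=> xV; apply: finj => //; [exact: (gP _).1 | exact: (gP _).2].
exists g; split.
- by move=> y1 y2 e; rewrite -(gP y1).2 -(gP y2).2 e.
- apply/setP=> x; apply/idP/imsetP => [xV|[y _ ->]]; last exact: (gP y).1.
  by exists (f x); rewrite ?gf.
- move=> B; rewrite fiso; last by apply/subsetP=> x /imsetP [y _ ->]; exact: (gP y).1.
  by rewrite -imset_comp (eq_imset _ (fun y => (gP y).2)) imset_id.
Qed.

(* If S = \partial \hat F is nonempty, its vertices are exactly those of F, so the
   trace F of F on S is not a face of S: S is not face-like. *)
Lemma face_like_not_boundary (T : finType) (K S : {set {set T}}) F :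
  cubical_complex K -> S != set0 -> face_like S K -> F \in K -> S <> hat_boundary K F.
Proof.
case=> K0 Kv _ _ /set0Pn [X XS] FL FK eS; rewrite eS !inE in XS.
case/and3P: XS => XF XK XsF.
have x_in x : x \in F -> [set x] \in K by move=> xF; apply: Kv; apply/bigcupP; exists F.
have VF : vertices S = F.
  apply/eqP; rewrite eqEsubset; apply/andP; split.
    by apply/bigcupsP=> Y; rewrite eS !inE => /and3P [].
  apply/subsetP=> x xF; apply/bigcupP; exists [set x]; rewrite ?inE //.
  rewrite eS !inE x_in // sub1set xF !andbT; apply: contraNneq XF => Fx.
  move: XsF; rewrite -Fx subset1 => /orP [] // /eqP X0.
  by rewrite -X0 XK in K0.
have := FL F FK; rewrite VF setIid => -[F0|]; first by rewrite -F0 FK in K0.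
by rewrite eS !inE eqxx.
Qed.

Section SphereInCube.

Variables (n N : nat) (K S : {set {set cvert n}}) (g : cvert N -> cvert n).
Hypothesis K_cube : subcomplex K (cube_faces n).
Hypothesis S_K : S \subset K.
Hypothesis g_inj : injective g.
Hypothesis S_vertices : vertices S = g @: setT.
Hypothesis g_faces : forall B : {set cvert N}, (g @: B \in S) = (B \in boundary_cube N).
Hypothesis N_gt1 : 1 < N.

Lemma sphere_neq0 : S != set0.
Proof.
apply/set0Pn; exists (g @: [set [ffun=> false]]).
by rewrite g_faces boundary_cube_vertex // ltnW.
Qed.

(* Edges of \partial I^N go to edges of the cube, hence g is a coordinate embedding. *)
Lemma sphere_coordinates :
  exists D : 'I_N -> 'I_n, injective D /\ forall y i, g (flip i y) = flip (D i) (g y).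
Proof.
apply: edge_map_coordinates => // y i; apply: edge_is_flip.
  by rewrite (inj_eq g_inj) eq_sym flip_neq.
apply: (subsetP K_cube.1); apply: (subsetP S_K).
have -> : [set g y; g (flip i y)] = g @: [set y; flip i y] by rewrite imsetU1 imset_set1.
by rewrite g_faces boundary_cube_edge.
Qed.

Lemma sphere_vertices_face : vertices S \in cube_faces n.
Proof.
have [D [D_inj g_flip]] := sphere_coordinates.
by rewrite S_vertices; apply: embedding_image_face D_inj g_flip.
Qed.

Lemma sphere_vertices_notin : vertices S \notin S.
Proof. by rewrite S_vertices g_faces !inE eqxx. Qed.

(* A cube face G meeting S either traces a face of S or contains all of S:
   its preimage under g is a face of I^N, proper or not. *)
Lemma sphere_trace G : G \in cube_faces n -> G :&: vertices S != set0 ->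
  G :&: vertices S \in S \/ vertices S \subset G.
Proof.
move=> /imsetP [p _ ->]; rewrite S_vertices.
move=> /set0Pn [x0 /setIP [x0G /imsetP [y0 _ x0E]]].
have [D [D_inj g_flip]] := sphere_coordinates.
set B := [set y | g y \in cube_face p].
have traceE : cube_face p :&: g @: setT = g @: B.
  apply/setP=> x; rewrite inE; apply/andP/imsetP => [[xG /imsetP [y _ xE]]|[y]].
    by exists y; rewrite // inE -xE.
  by rewrite inE => gyG ->; rewrite gyG imset_f.
have [BT|BnT] := eqVneq B setT; first by right; rewrite -BT -traceE subsetIl.
left; rewrite traceE g_faces !inE BnT.
by apply: (embedding_preimage_face D_inj g_flip (y0 := y0)); rewrite -x0E.
Qed.

Lemma sphere_is_boundary : vertices S \in K -> S = hat_boundary K (vertices S).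
Proof.
move=> VK; apply/setP=> X; rewrite !inE.
apply/idP/and3P => [XS|[XV XK XsV]].
  split; [by apply: (contraNneq _ sphere_vertices_notin) => <- | exact: (subsetP S_K) |].
  exact: (bigcup_sup X XS).
have X0 : X :&: vertices S != set0.
  have [_ [K0 _ _ _]] := K_cube.
  by rewrite (setIidPl XsV); apply: contraNneq K0 => <-.
have [|VsX] := sphere_trace (subsetP K_cube.1 X XK) X0; first by rewrite (setIidPl XsV).
by move: XV; rewrite eqEsubset XsV VsX.
Qed.

(* Converse direction of the theorem: a face F of K meeting S but not tracing a face
   of S contains all of S, so the face spanned by S lies in K and S is its boundary. *)
Lemma not_boundary_face_like :
  (forall F, F \in K -> S <> hat_boundary K F) -> face_like S K.
Proof.
move=> not_bd F FK; have [->|FV0] := eqVneq (F :&: vertices S) set0; first by left.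
have [|VF] := sphere_trace (subsetP K_cube.1 F FK) FV0; first by right.
have VK : vertices S \in K.
  exact: subcomplex_cube_down_closed K_cube FK sphere_vertices_face VF.
by case: (not_bd _ VK); apply: sphere_is_boundary.
Qed.

End SphereInCube.

Theorem mainTheorem3 (n : nat) (K : {set {set cvert n}}) (k : nat)
    (S : {set {set cvert n}}) :
  subcomplex K (cube_faces n) ->
  subcomplex S K ->
  complex_iso S (boundary_cube k.+1) ->
  1 <= k ->
  face_like S K <-> (forall F, F \in K -> S <> hat_boundary K F).
Proof.
move=> K_cube [S_K _] iso k_ge1.
have [g [g_inj S_vertices g_faces]] :=
  complex_iso_inverse iso (vertices_boundary_cube (ltn0Sn k)).
split => [S_face_like F FK|].
  have S_neq0 := sphere_neq0 g_faces k_ge1.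
  exact: face_like_not_boundary K_cube.2 S_neq0 S_face_like FK.
exact: not_boundary_face_like K_cube S_K g_inj S_vertices g_faces k_ge1.
Qed.
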